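(* For every $f\in\mathbb Z[x_1,\dots,x_n]$, $$\langle f\rangle_n=\mathsf T_{1,2}(\mathsf T_{1,3}+\mathsf T_{2,3})\cdots(\mathsf T_{1,n}+\cdots+\mathsf T_{n-1,n})f.$$ In particular, if $f$ is homogeneous of degree $n-1$, then $\langle f\rangle_n=T_1(T_1+T_2)\cdots(T_1+\cdots+T_{n-1})f$.
   Context: Divided symmetrization: $\langle f\rangle_n=\sum_{\sigma\in S_n}\frac{f(x_{\sigma(1)},\dots,x_{\sigma(n)})}{(x_{\sigma(1)}-x_{\sigma(2)})\cdots(x_{\sigma(n-1)}-x_{\sigma(n)})}$. For $1\le i\le m\le n$, $\mathsf R_{i,m}$ acts on $\mathbb Z[x_1,\dots,x_n]$ by $f\mapsto f(x_1,\dots,x_{i-1},x_m,x_i,\dots,x_{m-1},x_{m+1},\dots,x_n)$, and for $1\le i\le m-1$, $\mathsf T_{i,m}f=\frac{\mathsf R_{i+1,m}f-\mathsf R_{i,m}f}{x_i-x_m}$ (a polynomial); composition is applied right to left. $R_if=f(x_1,\dots,x_{i-1},0,x_i,\dots)$, $T_if=\frac1{x_i}(R_{i+1}f-R_if)$. *)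

From HB Require Import structures.
From mathcomp Require Import all_boot all_algebra.
From mathcomp Require Import fingroup perm fraction mpoly.
From Stdlib Require Import ClassicalEpsilon.
Set Implicit Arguments. Unset Strict Implicit. Unset Printing Implicit Defensive.
Import GRing.Theory.
Local Open Scope ring_scope.

Notation "x %:F" := (@FracField.tofrac _ x).

(* The variable x_p of Z[x_1,...,x_n], 1-based; 0 if p is out of range. *)
Definition xv (n : nat) (p : nat) : {mpoly int[n]} :=
  if (0 < p)%N then (if (insub p.-1 : option 'I_n) is Some i
                 then 'X_i else 0)
  else 0.

Definition substP (n : nat) (g : nat -> {mpoly int[n]}) (f : {mpoly int[n]})
  : {mpoly int[n]} := f \mPo [tuple g (val j).+1 | j < n].

(* Exact division: the (unique, when q != 0) g with g * q = p, if it exists. *)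
Definition exdiv (n : nat) (p q : {mpoly int[n]}) : {mpoly int[n]} :=
  epsilon (inhabits 0) (fun g => g * q = p).

(* R_{i,m} f = f(x_1,...,x_{i-1},x_m,x_i,...,x_{m-1},x_{m+1},...,x_n) *)
Definition Rop (n i m : nat) (f : {mpoly int[n]}) : {mpoly int[n]} :=
  substP (fun p => if (p < i)%N then xv n p
                   else if (p == i)%N then xv n m
                   else if (p <= m)%N then xv n p.-1
                   else xv n p) f.

Definition Top (n i m : nat) (f : {mpoly int[n]}) : {mpoly int[n]} :=
  exdiv (Rop (i.+1) m f - Rop i m f) (xv n i - xv n m).

Definition Tsum (n m : nat) (f : {mpoly int[n]}) : {mpoly int[n]} :=
  \sum_(1 <= i < m) Top i m f.

(* T_{1,2}(T_{1,3}+T_{2,3}) ... (T_{1,n}+...+T_{n-1,n}) f, applied right to left *)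
Definition Tchain (n : nat) (f : {mpoly int[n]}) : {mpoly int[n]} :=
  foldr (fun m g => Tsum m g) f (iota 2 n.-1).

Definition R0op (n i : nat) (f : {mpoly int[n]}) : {mpoly int[n]} :=
  substP (fun p => if (p < i)%N then xv n p
                   else if (p == i)%N then 0
                   else xv n p.-1) f.

Definition T0op (n i : nat) (f : {mpoly int[n]}) : {mpoly int[n]} :=
  exdiv (R0op (i.+1) f - R0op i f) (xv n i).

Definition T0sum (n k : nat) (f : {mpoly int[n]}) : {mpoly int[n]} :=
  \sum_(1 <= i < k.+1) T0op i f.

(* T_1 (T_1+T_2) ... (T_1+...+T_{n-1}) f, applied right to left *)
Definition T0chain (n : nat) (f : {mpoly int[n]}) : {mpoly int[n]} :=
  foldr (fun k g => T0sum k g) f (iota 1 n.-1).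

(* x_{s(k)} (0-based position k), 0 if out of range *)
Definition xs (n : nat) (s : 'S_n) (k : nat) : {mpoly int[n]} :=
  if (insub k : option 'I_n) is Some i then 'X_(s i) else 0.

(* Divided symmetrization, as an element of the fraction field of Z[x_1..x_n]:
   sum_s f(x_{s 1},...,x_{s n}) / ((x_{s 1}-x_{s 2}) ... (x_{s(n-1)}-x_{s n})) *)
Definition dsym (n : nat) (f : {mpoly int[n]}) : {fraction {mpoly int[n]}} :=
  \sum_(s : 'S_n)
     (f \mPo [tuple 'X_(s j) | j < n])%:F
     / (\prod_(0 <= k < n.-1) (xs s k - xs s k.+1))%:F.

From HB Require Import structures.
From mathcomp Require Import all_boot all_algebra.
From mathcomp Require Import fingroup perm fraction mpoly.
From Stdlib Require Import ClassicalEpsilon.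
From mathcomp Require Import zify ring.

(* Write <f>_n as the last of the partial symmetrizations D_m f, which sum only over
   the permutations of x_1, ..., x_m, with the chain denominator of length m - 1, so
   that D_1 f = f.  Grouping the permutations in D_m by the position j of x_m, each
   one is "insert x_m at position j" after a permutation of x_1, ..., x_(m-1), and a
   partial fraction identity for inserting a point y_M into a chain y_0, ..., y_(M-1)
   gives D_m f = D_(m-1) ((T_(1,m) + ... + T_(m-1,m)) f); iterating yields the first
   formula.  Each T_(i,m) lowers the degree by one, so for f homogeneous of degree
   n - 1 the result is a constant.  Setting x_m = 0 turns T_(i,m) into T_i and
   commutes with T_(i,m') for m' < m, so specializing x_n, ..., x_2 to 0 one at a
   time transforms the first chain into the second without changing the constant. *)

Set Implicit Arguments. Unset Strict Implicit. Unset Printing Implicit Defensive.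
Import GRing.Theory.
Local Open Scope ring_scope.

Lemma comp_mpolyA n k l (R : comRingType) (p : {mpoly R[n]})
   (a : n.-tuple {mpoly R[k]}) (b : k.-tuple {mpoly R[l]}) :
  (p \mPo a) \mPo b = p \mPo [tuple (tnth a i \mPo b) | i < n].
Proof.
rewrite (comp_mpolyEX p a) (comp_mpolyEX p) raddf_sum /=.
apply: eq_bigr => m _; rewrite comp_mpolyZ !comp_mpolyX rmorph_prod /=.
congr (_ *: _); apply: eq_bigr => i _.
by rewrite rmorphXn /= tnth_mktuple.
Qed.

Section Divides.
Variable R : comRingType.

Definition divides (d x : R) := exists c, x = c * d.

Lemma divides0 d : divides d 0.
Proof. by exists 0; rewrite mul0r. Qed.

Lemma dividesD d x y : divides d x -> divides d y -> divides d (x + y).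
Proof. by move=> [a ->] [b ->]; exists (a + b); rewrite mulrDl. Qed.

Lemma dividesMl d x y : divides d y -> divides d (x * y).
Proof. by move=> [a ->]; exists (x * a); rewrite mulrA. Qed.

Lemma divides_subD d x1 x2 y1 y2 :
  divides d (x1 - x2) -> divides d (y1 - y2) -> divides d (x1 + y1 - (x2 + y2)).
Proof.
move=> h1 h2; have -> : x1 + y1 - (x2 + y2) = (x1 - x2) + (y1 - y2) by ring.
exact: dividesD.
Qed.

Lemma divides_subM d x1 x2 y1 y2 :
  divides d (x1 - x2) -> divides d (y1 - y2) -> divides d (x1 * y1 - x2 * y2).
Proof.
move=> h1 h2; have -> : x1 * y1 - x2 * y2 = x1 * (y1 - y2) + y2 * (x1 - x2).
  by ring.
by apply: dividesD; apply: dividesMl.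
Qed.

Lemma divides_subX d x y e : divides d (x - y) -> divides d (x ^+ e - y ^+ e).
Proof.
move=> h; elim: e => [|e ih]; first by rewrite !expr0 subrr; apply: divides0.
by rewrite !exprS; apply: divides_subM.
Qed.

End Divides.

Lemma divides_comp_mpoly (R : comRingType) k l (d : {mpoly R[l]}) (p : {mpoly R[k]})
  (a b : k.-tuple {mpoly R[l]}) :
  (forall i, divides d (tnth a i - tnth b i)) -> divides d ((p \mPo a) - (p \mPo b)).
Proof.
move=> h; rewrite !comp_mpolyE.
apply: (big_ind2 (fun x y => divides d (x - y))).
- by rewrite subrr; apply: divides0.
- exact: divides_subD.
move=> m _; rewrite -scalerBr -!mul_mpolyC; apply: dividesMl.
apply: (big_ind2 (fun x y => divides d (x - y))).
- by rewrite subrr; apply: divides0.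
- exact: divides_subM.
by move=> i _; apply: divides_subX.
Qed.

Lemma exdivK n (p q : {mpoly int[n]}) : divides q p -> exdiv p q * q = p.
Proof.
move=> [c e]; apply: (epsilon_spec (inhabits 0) (fun g => g * q = p)).
by exists c.
Qed.

Section MsizeComp.
Variables (R : idomainType) (n k : nat).

Lemma msizeM_le_pred (p q : {mpoly R[k]}) : (msize (p * q) <= (msize p + msize q).-1)%N.
Proof.
have [->|p0] := eqVneq p 0; first by rewrite mul0r msize0.
have [->|q0] := eqVneq q 0; first by rewrite mulr0 msize0.
by rewrite msizeM.
Qed.

Lemma msize_prod_le I (r : seq I) (P : pred I) (F : I -> {mpoly R[k]}) (d : I -> nat) :
  (forall i, msize (F i) <= (d i).+1)%N ->
  (msize (\prod_(i <- r | P i) F i) <= (\sum_(i <- r | P i) d i).+1)%N.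
Proof.
move=> h; apply: (big_rec2 (fun x y => msize x <= y.+1)%N); first by rewrite msize1.
by move=> i y x _ hx; apply: (leq_trans (msizeM_le_pred _ _)); have := h i; lia.
Qed.

Lemma msize_exp_le (a : {mpoly R[k]}) e : (msize a <= 2)%N -> (msize (a ^+ e) <= e.+1)%N.
Proof.
move=> ha; elim: e => [|e ih]; first by rewrite expr0 msize1.
by rewrite exprS; apply: (leq_trans (msizeM_le_pred _ _)); lia.
Qed.

Lemma msize_comp_le (p : {mpoly R[n]}) (lq : n.-tuple {mpoly R[k]}) :
  (forall i, msize (tnth lq i) <= 2)%N -> (msize (p \mPo lq) <= msize p)%N.
Proof.
move=> h; rewrite comp_mpolyE big_seq.
apply: (big_ind (fun x => msize x <= msize p)%N); first by rewrite msize0.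
  by move=> x y hx hy; apply: (leq_trans (msizeD_le _ _)); rewrite geq_max hx hy.
move=> m hm; apply: (leq_trans (msizeZ_le _ _)).
apply: (leq_trans (msize_prod_le _ _ (d := fun i => m i) _)).
  by move=> i; apply: msize_exp_le.
by rewrite -mdegE; apply: msize_mdeg_lt.
Qed.

Lemma msize_XB (a b : 'I_n) : a != b -> (2 <= msize ('X_a - 'X_b : {mpoly R[n]}))%N.
Proof.
move=> ab; rewrite ltnNge; apply/negP => /msize1_polyC e.
have := congr1 (meval (fun i => (i == a)%:R)) e.
have := congr1 (meval (fun i => 0)) e.
rewrite !mevalC !mevalB !mevalXU eqxx (negbTE (b := b == a)) ?(eq_sym b) //.
by move=> <- /eqP; rewrite /= subrr mulr0n subr0 mulr1n oner_eq0.
Qed.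

Lemma msize_homog (f : {mpoly R[n]}) d : f \is ishomog1 d mdeg -> (msize f <= d.+1)%N.
Proof.
move=> /allP hom; rewrite msizeE big_seq.
apply: (big_ind (fun x => x <= d.+1)%N) => //.
  by move=> x y hx hy; rewrite geq_max hx hy.
by move=> m /hom /eqP ->.
Qed.

End MsizeComp.

Definition Rmap (i m p : nat) : nat :=
  if (p < i)%N then p else if p == i then m else if (p <= m)%N then p.-1 else p.

Lemma Rmap_lt i m p : (p < i)%N -> Rmap i m p = p.
Proof. by rewrite /Rmap => ->. Qed.

Lemma Rmap_eq i m : Rmap i m i = m.
Proof. by rewrite /Rmap ltnn eqxx. Qed.

Lemma Rmap_gt i m p : (i < p <= m)%N -> Rmap i m p = p.-1.
Proof. by rewrite /Rmap; do ![case: ifP]; lia. Qed.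

Lemma Rmap_leq i m p : (Rmap i m p <= maxn m p)%N.
Proof. by rewrite /Rmap; do ![case: ifP]; lia. Qed.

Lemma Rmap_inj i m a b : (i <= m)%N -> Rmap i m a = Rmap i m b -> a = b.
Proof. by move=> h; rewrite /Rmap; do ![case: ifP]; lia. Qed.

Lemma Rmap_gtm i m p : (i <= m < p)%N -> Rmap i m p = p.
Proof. by rewrite /Rmap; do ![case: ifP]; lia. Qed.

Lemma RmapSS i m p : Rmap i.+1 m.+1 p.+1 = (Rmap i m p).+1.
Proof. by rewrite /Rmap; do ![case: ifP]; lia. Qed.

Definition R0map (i p : nat) : nat :=
  if (p < i)%N then p else if p == i then 0%N else p.-1.

Lemma R0map0 m : (0 < m)%N -> R0map m 0 = 0%N.
Proof. by rewrite /R0map => ->. Qed.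

Lemma R0map_leq m p : (R0map m p <= p)%N.
Proof. by rewrite /R0map; do ![case: ifP]; lia. Qed.

Section InsertionIdentity.
Variables (K : fieldType) (M : nat) (y F : nat -> K).
Hypothesis M_gt0 : (0 < M)%N.
Hypothesis y_neq : forall a b, (a <= M)%N -> (b <= M)%N -> a != b -> y a != y b.

Local Notation chain_den := (\prod_(0 <= k < M.-1) (y k - y k.+1)).
Local Notation ins_den j := (\prod_(0 <= k < M) (y (Rmap j M k) - y (Rmap j M k.+1))).
Local Notation w i := (y i - y M)^-1.

Lemma yB_neq0 a b : (a <= M)%N -> (b <= M)%N -> a != b -> y a - y b != 0.
Proof. by move=> ha hb hab; rewrite subr_eq0 y_neq. Qed.

Lemma prod_chain_neq0 a b : (b <= M)%N -> \prod_(a <= k < b) (y k - y k.+1) != 0.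
Proof.
move=> hb; rewrite prodf_seq_neq0; apply/allP => k.
by rewrite mem_index_iota => /andP[_ hk]; apply: yB_neq0; lia.
Qed.

Lemma ins_den_first : ins_den 0 = (y M - y 0) * chain_den.
Proof.
rewrite big_ltn // big_add1 /= Rmap_eq Rmap_gt ?M_gt0 //; congr (_ * _).
by apply: eq_big_nat => k hk; rewrite !Rmap_gt //; lia.
Qed.

Lemma ins_den_last : ins_den M = chain_den * (y M.-1 - y M).
Proof.
rewrite -{1}(prednK M_gt0) big_nat_recr //= prednK //; congr (_ * _).
  by apply: eq_big_nat => k hk; rewrite !Rmap_lt //; lia.
by rewrite Rmap_lt ?Rmap_eq //; lia.
Qed.

Lemma ins_den_mid j : (0 < j < M)%N ->
  ins_den j * (y j.-1 - y j) = chain_den * ((y j.-1 - y M) * (y M - y j)).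
Proof.
move=> /andP[j_gt0 jM].
rewrite (@big_cat_nat _ _ _ j.-1) //=; last by lia.
rewrite (@big_ltn _ _ _ j.-1); last by lia.
rewrite prednK // (@big_ltn _ _ _ j) // big_add1.
rewrite (@big_cat_nat _ _ _ j.-1 0 M.-1) //=; last by lia.
rewrite (@big_ltn _ _ _ j.-1) ?prednK; try lia.
have -> : \prod_(0 <= k < j.-1) (y (Rmap j M k) - y (Rmap j M k.+1)) =
          \prod_(0 <= k < j.-1) (y k - y k.+1).
  by apply: eq_big_nat => k hk; rewrite !Rmap_lt //; lia.
have -> : \prod_(j <= k < M.-1) (y (Rmap j M k.+1) - y (Rmap j M k.+2)) =
          \prod_(j <= k < M.-1) (y k - y k.+1).
  by apply: eq_big_nat => k hk; rewrite !Rmap_gt //; lia.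
rewrite Rmap_lt ?Rmap_eq ?Rmap_gt ?prednK //=; try lia.
ring.
Qed.

(* Inserting y_M between y_(j-1) and y_j replaces the factor y_(j-1) - y_j by
   (y_(j-1) - y_M) (y_M - y_j), and w (j-1) - w j = (y_j - y_(j-1)) w (j-1) w j. *)
Lemma ins_denV j : (j <= M)%N ->
  (ins_den j)^-1 =
  ((if (0 < j)%N then w j.-1 else 0) - (if (j < M)%N then w j else 0)) / chain_den.
Proof.
move=> jM; have hC := @prod_chain_neq0 0 M.-1 (leq_pred M).
have [->|j_gt0] := posnP j.
  have h0 : y 0 - y M != 0 by apply: yB_neq0; lia.
  have h0' : y M - y 0 != 0 by apply: yB_neq0; lia.
  by rewrite ins_den_first M_gt0 sub0r; field; rewrite hC h0 h0'.
have [->|jltM] := eqVneq j M.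
  have h1 : y M.-1 - y M != 0 by apply: yB_neq0; lia.
  by rewrite ins_den_last ltnn subr0; field; rewrite hC h1.
have jlt : (j < M)%N by lia.
rewrite jlt.
have hu : y j.-1 - y M != 0 by apply: yB_neq0; lia.
have hv : y M - y j != 0 by apply: yB_neq0; lia.
have hv' : y j - y M != 0 by apply: yB_neq0; lia.
have huv : y j.-1 - y j != 0 by apply: yB_neq0; lia.
rewrite -[ins_den j](mulfK huv) ins_den_mid; last by lia.
by field; rewrite hC hv' hu huv hv.
Qed.

Lemma insertion_identity :
  \sum_(0 <= i < M) (F i.+1 - F i) / (y i - y M) / chain_den
  = \sum_(0 <= j < M.+1) F j / ins_den j.
Proof.
have -> : \sum_(0 <= j < M.+1) F j / ins_den j = \sum_(0 <= j < M.+1)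
    F j * ((if (0 < j)%N then w j.-1 else 0) - (if (j < M)%N then w j else 0))
    / chain_den.
  by apply: eq_big_nat => j hj; rewrite ins_denV ?mulrA //; lia.
rewrite -!mulr_suml; congr (_ * _).
under [RHS]eq_bigr do rewrite mulrBr.
under [LHS]eq_bigr do rewrite mulrBl.
rewrite !sumrB big_nat_recl // big_nat_recr //= ltnn !mulr0 add0r addr0.
by congr (_ - _); apply: eq_big_nat => i hi; rewrite ifT //; lia.
Qed.

End InsertionIdentity.

Section Rename.
Variable n : nat.
Local Notation P := {mpoly int[n]}.

Lemma xv_ord (j : 'I_n) : xv n (val j).+1 = 'X_j.
Proof.
rewrite /xv /=; case: insubP => [i _ /val_inj -> //|]; by rewrite ltn_ord.
Qed.

Lemma xvS p (hp : (p < n)%N) : xv n p.+1 = 'X_(Ordinal hp).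
Proof. exact: xv_ord (Ordinal hp). Qed.

Lemma xv0 : xv n 0 = 0.
Proof. by []. Qed.

Lemma xv_neq0 p : (0 < p <= n)%N -> xv n p != 0.
Proof.
case: p => // p /= hp.
by rewrite (xvS hp) -msize_poly_eq0 msizeX mdeg1.
Qed.

Lemma XB_neq0 (a b : 'I_n) : a != b -> ('X_a : P) - 'X_b != 0.
Proof. by move=> ab; rewrite -msize_poly_eq0 -lt0n (leq_trans _ (msize_XB _ ab)). Qed.

Lemma xvB_neq0 a b : (0 < a <= n)%N -> (0 < b <= n)%N -> a != b ->
  xv n a - xv n b != 0.
Proof.
case: a => // a; case: b => // b /= ha hb ab.
by rewrite (xvS ha) (xvS hb) XB_neq0 //; apply: contra ab => /eqP [->].
Qed.

Lemma substP_ext g h (f : P) :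
  (forall p, (0 < p <= n)%N -> g p = h p) -> substP g f = substP h f.
Proof.
move=> e; rewrite /substP; congr (_ \mPo _).
by apply: eq_from_tnth => j; rewrite !tnth_mktuple e //= ltn_ord.
Qed.

Lemma substP_xv h p : (0 < p <= n)%N -> substP h (xv n p) = h p.
Proof.
case: p => // p /= lt; rewrite (xvS lt).
by rewrite /substP comp_mpolyXU -tnth_nth tnth_mktuple.
Qed.

Lemma substP_comp g h (f : P) :
  substP h (substP g f) = substP (fun p => substP h (g p)) f.
Proof.
rewrite /substP comp_mpolyA; congr (_ \mPo _).
by apply: eq_from_tnth => j; rewrite !tnth_mktuple.
Qed.

(* Substitute x_(k p) for x_p; the index 0 stands for the constant 0. *)
Definition rename (k : nat -> nat) (f : P) : P := substP (fun p => xv n (k p)) f.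

Lemma rename_xv k p : (0 < p <= n)%N -> rename k (xv n p) = xv n (k p).
Proof. exact: substP_xv. Qed.

Lemma rename_ext k l (f : P) :
  (forall p, (0 < p <= n)%N -> k p = l p) -> rename k f = rename l f.
Proof. by move=> e; apply: substP_ext => p hp; rewrite e. Qed.

Lemma rename_comp k l (f : P) : k 0%N = 0%N ->
  (forall p, (0 < p <= n)%N -> (l p <= n)%N) ->
  rename k (rename l f) = rename (fun p => k (l p)) f.
Proof.
move=> k0 hl; rewrite /rename substP_comp; apply: substP_ext => p hp.
have := hl p hp; case: (l p) => [|q] hq; last by rewrite substP_xv.
by rewrite /= k0 /substP comp_mpoly0.
Qed.

Lemma renameM k (f g : P) : rename k (f * g) = rename k f * rename k g.
Proof. exact: rmorphM. Qed.

Lemma renameB k (f g : P) : rename k (f - g) = rename k f - rename k g.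
Proof. exact: rmorphB. Qed.

Lemma rename_sum k I r (Q : pred I) (F : I -> P) :
  rename k (\sum_(i <- r | Q i) F i) = \sum_(i <- r | Q i) rename k (F i).
Proof. exact: raddf_sum. Qed.

Lemma renameC k c : rename k c%:MP = c%:MP.
Proof. exact: comp_mpolyC. Qed.

End Rename.

Section Operators.
Variable n : nat.
Local Notation P := {mpoly int[n]}.

Lemma Rop_rename i m (f : P) : Rop i m f = rename (Rmap i m) f.
Proof. by apply: substP_ext => p _; rewrite /Rmap; do ![case: ifP]. Qed.

Lemma rename_Rop k i m (f : P) : k 0%N = 0%N -> (m <= n)%N ->
  rename k (Rop i m f) = rename (fun p => k (Rmap i m p)) f.
Proof.
move=> k0 mn; rewrite Rop_rename rename_comp // => p /andP[_ pn].
by rewrite (leq_trans (Rmap_leq _ _ _)) // geq_max mn.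
Qed.

Lemma Top_mul i m (f : P) : (0 < i)%N -> (i < m)%N -> (m <= n)%N ->
  Top i m f * (xv n i - xv n m) = Rop i.+1 m f - Rop i m f.
Proof.
move=> i0 im mn; apply: exdivK; rewrite !Rop_rename.
apply: divides_comp_mpoly => j; rewrite !tnth_mktuple.
have [->|pi] := eqVneq (val j).+1 i.
  by rewrite Rmap_lt // Rmap_eq; exists 1; rewrite mul1r.
have [->|pi1] := eqVneq (val j).+1 i.+1.
  rewrite Rmap_eq Rmap_gt /=; last by lia.
  by exists (-1); rewrite mulN1r opprB.
have -> : Rmap i.+1 m (val j).+1 = Rmap i m (val j).+1.
  by rewrite /Rmap; do ![case: ifP]; lia.
by rewrite subrr; apply: divides0.
Qed.

Definition perm_idx (s : 'S_n) (p : nat) : nat :=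
  if p is q.+1 then (if insub q is Some i then (val (s i)).+1 else 0%N) else 0%N.

Lemma perm_idx_ord s (j : 'I_n) : perm_idx s (val j).+1 = (val (s j)).+1.
Proof. by rewrite /= valK. Qed.

Lemma xv_perm_idx s p (hp : (p < n)%N) : xv n (perm_idx s p.+1) = 'X_(s (Ordinal hp)).
Proof. exact: (etrans (congr1 (xv n) (perm_idx_ord s (Ordinal hp))) (xv_ord _)). Qed.

Lemma comp_perm_rename (s : 'S_n) (g : P) :
  g \mPo [tuple 'X_(s j) | j < n] = rename (perm_idx s) g.
Proof.
rewrite /rename /substP; congr (_ \mPo _); apply: eq_from_tnth => j.
by rewrite !tnth_mktuple perm_idx_ord xv_ord.
Qed.

Lemma xs_perm_idx s k : xs s k = xv n (perm_idx s k.+1).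
Proof. by rewrite /xs /=; case: insub => [i|]; rewrite ?xv_ord. Qed.

Definition fixes_from (m : nat) (s : 'S_n) : bool :=
  [forall i : 'I_n, (m <= i)%N ==> (s i == i)].

Definition chain_term (m : nat) (g : P) (s : 'S_n) : {fraction P} :=
  (g \mPo [tuple 'X_(s j) | j < n])%:F / (\prod_(0 <= k < m.-1) (xs s k - xs s k.+1))%:F.

Definition pdsym (m : nat) (g : P) : {fraction P} :=
  \sum_(s : 'S_n | fixes_from m s) chain_term m g s.

Lemma dsym_pdsym (f : P) : dsym f = pdsym n f.
Proof.
apply: eq_bigl => s; symmetry; apply/forallP => i; apply/implyP => h.
by move: (ltn_ord i); rewrite ltnNge h.
Qed.

Lemma fixes_from1 s : fixes_from 1 s = (s == 1%g).
Proof.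
apply/forallP/eqP => [h|-> i]; last by rewrite perm1 eqxx implybT.
apply/permP => i; rewrite perm1; have [i0|ip] := posnP i; last first.
  by apply/eqP; move: (h i); rewrite ip.
apply/eqP; apply: contraT => ne.
have hsi : (0 < s i)%N by rewrite lt0n -i0 val_eqE.
by have := h (s i); rewrite hsi /= => /eqP /perm_inj e; rewrite e eqxx in ne.
Qed.

Lemma pdsym1 (g : P) : pdsym 1 g = g%:F.
Proof.
rewrite /pdsym (big_pred1 1%g) => [|s]; last by rewrite fixes_from1.
rewrite /chain_term big_geq // divr1 -[in RHS](comp_mpoly_id g); congr ((_ \mPo _)%:F).
by apply: eq_from_tnth => j; rewrite !tnth_mktuple perm1.
Qed.

End Operators.

Section InsertionPerm.
Variable n : nat.

(* The guard makes [ins_perm M j] total; it is the identity when meaningless. *)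
Definition ins_fun (M j : nat) (x : 'I_n) : 'I_n :=
  if (j <= M)%N && (M < n)%N then insubd x (Rmap j M x) else x.

Lemma ins_funE M j x : (j <= M)%N -> (M < n)%N -> val (ins_fun M j x) = Rmap j M x.
Proof.
move=> jM Mn; rewrite /ins_fun jM Mn val_insubd.
by have := ltn_ord x; rewrite /Rmap; do ![case: ifP]; lia.
Qed.

Lemma ins_fun_inj M j : injective (ins_fun M j).
Proof.
move=> x x'; case h: ((j <= M)%N && (M < n)%N); last by rewrite /ins_fun h.
move/andP: h => [jM Mn] /(congr1 val); rewrite !ins_funE //.
by move/(Rmap_inj jM)/val_inj.
Qed.

Definition ins_perm M j : 'S_n := perm (@ins_fun_inj M j).

Lemma ins_permE M j x : (j <= M)%N -> (M < n)%N -> val (ins_perm M j x) = Rmap j M x.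
Proof. by move=> jM Mn; rewrite permE ins_funE. Qed.

Lemma perm_idx_ins_perm M j (s : 'S_n) p : (j <= M)%N -> (M < n)%N -> (0 < p <= n)%N ->
  perm_idx (ins_perm M j * s) p = perm_idx s (Rmap j.+1 M.+1 p).
Proof.
move=> jM Mn; case: p => // p /= hp.
rewrite (insubT (fun x => x < n)%N hp) /= permM RmapSS.
by rewrite -(ins_permE (Ordinal hp) jM Mn) /= valK.
Qed.

(* Every permutation fixing the positions beyond M is uniquely of this shape, with
   j the position sent to M. *)
Lemma fixes_from_ins_perm M (j : 'I_n) (tau : 'S_n) (Mn : (M < n)%N) : (j <= M)%N ->
  fixes_from M.+1 (ins_perm M j * tau) && (((ins_perm M j * tau)^-1)%g (Ordinal Mn) == j)
  = fixes_from M tau.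
Proof.
move=> jM.
have fixM (x : 'I_n) : (M < x)%N -> ins_perm M j x = x.
  by move=> hx; apply: val_inj; rewrite ins_permE // Rmap_gtm //; lia.
have jtoM : ins_perm M j j = Ordinal Mn by apply: val_inj; rewrite ins_permE // Rmap_eq.
rewrite (canF_eq (permKV (ins_perm M j * tau))) permM jtoM.
apply/andP/forallP => [[/forallP hf hinv] x|h].
  apply/implyP => hx; have [xM|xM] := eqVneq (x : nat) M.
    by rewrite (_ : x = Ordinal Mn) 1?eq_sym //; apply: val_inj.
  have xM' : (M < x)%N by lia.
  by move: (hf x); rewrite permM fixM // xM'.
split; last by move: (h (Ordinal Mn)) => /implyP; rewrite eq_sym; apply => /=.
apply/forallP => x; apply/implyP => hx; rewrite permM fixM //.
by move: (h x) => /implyP; apply; lia.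
Qed.

End InsertionPerm.
Arguments ins_perm {n} M j.

Section Fiber.
Variables (n M : nat) (f : {mpoly int[n]}) (tau : 'S_n).
Hypotheses (M_gt0 : (0 < M)%N) (Mn : (M < n)%N).
Local Notation P := {mpoly int[n]}.
Local Notation y k := ((xv n (perm_idx tau k.+1))%:F : {fraction P}).
Local Notation F j := ((rename (perm_idx tau) (Rop j.+1 M.+1 f))%:F : {fraction P}).

Lemma y_neq a b : (a <= M)%N -> (b <= M)%N -> a != b -> y a != y b.
Proof.
move=> ha hb ab; rewrite tofrac_eq -subr_eq0.
have ha' : (a < n)%N by lia.
have hb' : (b < n)%N by lia.
rewrite (xv_perm_idx _ ha') (xv_perm_idx _ hb').
by apply: XB_neq0; apply: contra ab => /eqP /perm_inj /(congr1 val) /= ->.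
Qed.

Lemma ins_perm_term j : (j <= M)%N -> chain_term M.+1 f (ins_perm M j * tau)%g =
  F j / \prod_(0 <= k < M) (y (Rmap j M k) - y (Rmap j M k.+1)).
Proof.
move=> jM; rewrite /chain_term; congr (_ / _).
  rewrite comp_perm_rename rename_Rop //.
  by congr (_%:F); apply: rename_ext => p hp; rewrite perm_idx_ins_perm //; lia.
rewrite rmorph_prod; apply: eq_big_nat => k hk.
by rewrite rmorphB /= !xs_perm_idx !perm_idx_ins_perm ?RmapSS //; lia.
Qed.

Lemma Tsum_term : chain_term M (Tsum M.+1 f) tau =
  \sum_(0 <= i < M) (F i.+1 - F i) / (y i - y M) / \prod_(0 <= k < M.-1) (y k - y k.+1).
Proof.
rewrite /chain_term /Tsum comp_perm_rename rename_sum rmorph_sum /= mulr_suml big_add1 /=.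
apply: eq_big_nat => i hi; congr (_ / _); last first.
  by rewrite rmorph_prod; apply: eq_big_nat => k hk; rewrite rmorphB /= !xs_perm_idx.
have hyi : y i - y M != 0 by rewrite subr_eq0 y_neq //; lia.
apply: (mulIf hyi); rewrite divfK //.
have := Top_mul f (i := i.+1) (m := M.+1) isT ltac:(lia) Mn.
move/(congr1 (rename (perm_idx tau))); rewrite renameM !renameB !rename_xv; try lia.
by move/(congr1 (fun x => x%:F)); rewrite rmorphM !rmorphB.
Qed.

Lemma sum_ins_perm_term :
  \sum_(j : 'I_n | (j < M.+1)%N) chain_term M.+1 f (ins_perm M j * tau)%g
  = chain_term M (Tsum M.+1 f) tau.
Proof.
rewrite Tsum_term (insertion_identity _ M_gt0 y_neq).
rewrite -(big_ord_widen _ (fun j => chain_term M.+1 f (ins_perm M j * tau)%g) Mn).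
rewrite big_mkord.
by apply: eq_bigr => j _; rewrite ins_perm_term // -ltnS.
Qed.

End Fiber.

Lemma pdsym_Tsum n m (f : {mpoly int[n]}) : (2 <= m)%N -> (m <= n)%N ->
  pdsym m f = pdsym m.-1 (Tsum m f).
Proof.
case: m => // M M_gt0 Mn; have hM : (M < n)%N by lia.
rewrite /pdsym (partition_big (fun s : 'S_n => (s^-1)%g (Ordinal hM))
  (fun j : 'I_n => (j < M.+1)%N)) /=; last first.
  move=> s /forallP hs; rewrite ltnNge; apply/negP => hle.
  move: (hs ((s^-1)%g (Ordinal hM))); rewrite hle /= permKV => /eqP /(congr1 val) /= e.
  by move: hle; rewrite -e ltnn.
transitivity (\sum_(j : 'I_n | (j < M.+1)%N) \sum_(tau : 'S_n | fixes_from M tau)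
    chain_term M.+1 f (ins_perm M j * tau)%g).
  apply: eq_bigr => j jM; rewrite (reindex_inj (mulgI (ins_perm M j))) /=.
  by apply: eq_bigl => tau; rewrite fixes_from_ins_perm.
by rewrite exchange_big /=; apply: eq_bigr => tau _; rewrite sum_ins_perm_term.
Qed.

Lemma pdsym_foldr_Tsum n (f : {mpoly int[n]}) a k : (0 < a)%N -> (a + k <= n)%N ->
  pdsym (a + k) f = pdsym a (foldr (fun m g => Tsum m g) f (iota a.+1 k)).
Proof.
elim: k a => [|k IHk] a a_gt0 akn; first by rewrite addn0.
rewrite addnS -addSn IHk; [|lia|lia].
by rewrite (@pdsym_Tsum _ a.+1) //; lia.
Qed.

Lemma dsym_Tchain n (f : {mpoly int[n]}) : dsym f = (Tchain f)%:F.
Proof.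
rewrite dsym_pdsym /Tchain -pdsym1; case: n f => [|n] f.
  by apply: eq_bigl => s; apply/forallP/forallP => _ [].
by have := @pdsym_foldr_Tsum _ f 1 n isT (leqnn _); rewrite add1n => ->.
Qed.

Section Degree.
Variable n : nat.
Local Notation P := {mpoly int[n]}.

Lemma msize_xv p : (msize (xv n p) <= 2)%N.
Proof.
rewrite /xv; case: ifP => _; last by rewrite msize0.
by case: insub => [i|]; rewrite ?msize0 // msizeX mdeg1.
Qed.

Lemma msize_rename k (g : P) : (msize (rename k g) <= msize g)%N.
Proof. by apply: msize_comp_le => i; rewrite tnth_mktuple msize_xv. Qed.

Lemma msize_Top i m (g : P) : (0 < i)%N -> (i < m)%N -> (m <= n)%N ->
  (msize (Top i m g) <= (msize g).-1)%N.
Proof.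
move=> i0 im mn.
have hq : (2 <= msize (xv n i - xv n m))%N.
  case: i i0 im => // i _ im; case: m im mn => // m im mn.
  have hi : (i < n)%N by lia.
  have hm : (m < n)%N by lia.
  by rewrite (xvS hi) (xvS hm) msize_XB //; apply/eqP => -[]; lia.
have [->|T0] := eqVneq (Top i m g) 0; first by rewrite msize0.
have q0 : xv n i - xv n m != 0 by rewrite -msize_poly_eq0 -lt0n (leq_trans _ hq).
have hdiff : (msize (Rop i.+1 m g - Rop i m g) <= msize g)%N.
  by rewrite (leq_trans (msizeD_le _ _)) // msizeN geq_max !Rop_rename !msize_rename.
move: hdiff hq; rewrite -Top_mul // msizeM //.
set a := msize (Top i m g); set b := msize (xv n i - xv n m); lia.
Qed.

Lemma msize_Tsum m (g : P) : (m <= n)%N -> (msize (Tsum m g) <= (msize g).-1)%N.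
Proof.
move=> mn; rewrite /Tsum big_nat_cond.
apply: (big_ind (fun x => msize x <= (msize g).-1)%N); first by rewrite msize0.
  by move=> x y hx hy; apply: (leq_trans (msizeD_le _ _)); rewrite geq_max hx hy.
by move=> i /andP [/andP [h1 h2] _]; apply: msize_Top => //; lia.
Qed.

Lemma msize_foldr_Tsum (f : P) a k : (a + k <= n.+1)%N ->
  (msize (foldr (fun m g => Tsum m g) f (iota a k)) <= msize f - k)%N.
Proof.
elim: k a => [|k IHk] a hk /=; first by rewrite subn0.
apply: (leq_trans (msize_Tsum _ _)); first lia.
by have := IHk a.+1 ltac:(lia); lia.
Qed.

Lemma Tchain_homog_const (f : P) : (0 < n)%N -> f \is ishomog1 n.-1 mdeg ->
  Tchain f = ((Tchain f)@_0)%:MP.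
Proof.
move=> n0 /msize_homog hf; apply: msize1_polyC.
have := msize_foldr_Tsum f (a := 2) (k := n.-1) ltac:(lia).
rewrite -/(Tchain f); move: hf; set s := msize f; set t := msize (Tchain f); lia.
Qed.

End Degree.

Section ZeroSpecialization.
Variable n : nat.
Local Notation P := {mpoly int[n]}.
Local Notation Tfold := (foldr (fun m g => Tsum m g)).

Lemma R0op_rename i (f : P) : R0op i f = rename (R0map i) f.
Proof. by apply: substP_ext => p _; rewrite /R0map; do ![case: ifP]. Qed.

Lemma rename_R0map_Top i m (f : P) : (0 < i)%N -> (i < m)%N -> (m <= n)%N ->
  rename (R0map m) (Top i m f) = T0op i f.
Proof.
move=> i0 im mn.
have := congr1 (rename (R0map m)) (Top_mul f i0 im mn).
rewrite renameM !renameB !rename_xv; try lia.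
have -> : R0map m i = i by rewrite /R0map im.
have -> : R0map m m = 0%N by rewrite /R0map ltnn eqxx.
rewrite xv0 subr0 !rename_Rop ?R0map0 //; try lia.
have R0mapRmap j : (j <= i.+1)%N ->
    rename (fun p => R0map m (Rmap j m p)) f = R0op j f.
  move=> ji; rewrite R0op_rename; apply: rename_ext => p _.
  by rewrite /R0map /Rmap; do ![case: ifP]; lia.
rewrite !R0mapRmap //.
move=> e; have xi0 : xv n i != 0 by apply: xv_neq0; lia.
apply: (mulIf xi0); rewrite /T0op exdivK -e //.
by exists (rename (R0map m) (Top i m f)).
Qed.

Lemma rename_R0map_Top_lt i m' m (g : P) :
  (0 < i)%N -> (i < m')%N -> (m' < m)%N -> (m <= n)%N ->
  rename (R0map m) (Top i m' g) = Top i m' (rename (R0map m) g).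
Proof.
move=> i0 im' m'm mn.
have xim'0 : xv n i - xv n m' != 0 by apply: xvB_neq0; lia.
apply: (mulIf xim'0); rewrite Top_mul; try lia.
have := congr1 (rename (R0map m)) (Top_mul g i0 im' (ltnW (leq_trans m'm mn))).
rewrite renameM !renameB !rename_xv; try lia.
have -> : R0map m i = i by rewrite /R0map; case: ifP => //; lia.
have -> : R0map m m' = m' by rewrite /R0map m'm.
have R0mapRmap j : (0 < j <= m')%N ->
    rename (fun p => R0map m (Rmap j m' p)) g = Rop j m' (rename (R0map m) g).
  move=> /andP[j0 jm']; rewrite Rop_rename rename_comp.
  - by apply: rename_ext => p _; rewrite /R0map /Rmap; do ![case: ifP]; lia.
  - by rewrite /Rmap j0.
  - by move=> p /andP[_ pn]; rewrite (leq_trans (R0map_leq _ _)).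
by rewrite !rename_Rop ?R0map0 ?R0mapRmap //; lia.
Qed.

Lemma rename_R0map_Tsum m (g : P) : (2 <= m)%N -> (m <= n)%N ->
  rename (R0map m) (Tsum m g) = T0sum m.-1 g.
Proof.
move=> m2 mn; rewrite /Tsum /T0sum rename_sum prednK; last by lia.
by apply: eq_big_nat => i hi; apply: rename_R0map_Top; lia.
Qed.

Lemma rename_R0map_Tfold m (g : P) (L : seq nat) : (m <= n)%N ->
  all (fun k => k < m)%N L -> rename (R0map m) (Tfold g L) = Tfold (rename (R0map m) g) L.
Proof.
move=> mn; elim: L => //= k L IHL /andP [km kL]; rewrite -IHL // /Tsum rename_sum.
by apply: eq_big_nat => i hi; apply: rename_R0map_Top_lt; lia.
Qed.

(* T_(1,2) ... (T_(1,a) + ... + T_(a-1,a)) (T_1 + ... + T_a) ... (T_1 + ... + T_(n-1)) f: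
   this is Tchain f for a = n and T0chain f for a = 1. *)
Definition Tmixchain (f : P) (a : nat) : P :=
  Tfold (foldr (fun k g => T0sum k g) f (iota a (n - a))) (iota 2 a.-1).

Lemma rename_R0map_Tmixchain (f : P) a : (2 <= a)%N -> (a <= n)%N ->
  rename (R0map a) (Tmixchain f a) = Tmixchain f a.-1.
Proof.
move=> a2 an; rewrite /Tmixchain.
have -> : iota 2 a.-1 = iota 2 a.-2 ++ iota (2 + a.-2) 1.
  by rewrite -iotaD addn1; congr iota; lia.
rewrite (_ : 2 + a.-2 = a)%N; last by lia.
rewrite foldr_cat /= rename_R0map_Tfold //; last first.
  by apply/allP => k; rewrite mem_iota => /andP [h1 h2]; lia.
rewrite rename_R0map_Tsum //.
have -> : (n - a.-1 = (n - a).+1)%N by lia.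
by rewrite [iota a.-1 _]/= prednK //; lia.
Qed.

Lemma T0chain_Tchain_const (f : P) : (0 < n)%N -> Tchain f = ((Tchain f)@_0)%:MP ->
  T0chain f = Tchain f.
Proof.
move=> n0 hc.
suff : forall k, (k <= n.-1)%N -> Tmixchain f (n - k) = Tchain f.
  move/(_ n.-1 (leqnn _)); rewrite (_ : n - n.-1 = 1)%N; last by lia.
  by rewrite /Tmixchain /T0chain /= subn1.
elim=> [|k IHk] hk; first by rewrite subn0 /Tmixchain subnn.
have := rename_R0map_Tmixchain f (a := n - k) ltac:(lia) ltac:(lia).
rewrite IHk; last lia.
have -> : ((n - k).-1 = n - k.+1)%N by lia.
by rewrite hc renameC -hc => <-.
Qed.

End ZeroSpecialization.

Theorem mainTheorem15 (n : nat) (f : {mpoly int[n]}) :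
  dsym f = (Tchain f)%:F /\
  ((0 < n)%N -> f \is ishomog1 n.-1 mdeg -> dsym f = (T0chain f)%:F).
Proof.
split=> [|n_gt0 hom]; rewrite dsym_Tchain //.
by rewrite T0chain_Tchain_const //; apply: Tchain_homog_const.
Qed.
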